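(* Let $T>0$, $r\ge0$, $\rho\in[-1,1]$, $\alpha\ge0$, let $\mu(S,t),\sigma(S,t)\ge0$ be functions on $(0,\infty)\times[0,T]$ and $a(H,t),b(H,t)$ functions on $(0,\infty)\times[0,T]$ with $b$ nonvanishing, and set $\tilde\mu(S,H,t)=\mu(S,t)-(a(H,t)-r)\rho\sigma(S,t)/b(H,t)$. Define, for $S,H>0$, $t\in[0,T]$, $v,p,z\in\mathbb R$, $$h(S,H,t,v,p,z)=\big(\tilde\mu(S,H,t)+\alpha\sqrt{1-\rho^2}\,\sigma(S,t)\,\mathrm{sgn}(p)\big)Sp+rHz-rv.$$ Assume there are constants $C_1,C_2>0$ with $|\sigma(S_1,t)-\sigma(S_2,t)|\le C_1|\ln S_1-\ln S_2|$ and $\sigma(S,t)\le C_2\sqrt{S(1+\ln S)}$ for all $S,S_1,S_2>0$, $t\in[0,T]$. Assume further that there are constants $K,C_5>0$ with $|\tilde\mu(S,H,t)|\le K(1+|\ln S|+|\ln H|)$ and $|\tilde\mu(S_1,H_1,t)-\tilde\mu(S_2,H_2,t)|\le C_5|\ln S_1-\ln S_2|$ for all $S,H,S_i,H_i>0$, $t\in[0,T]$. Then: (iii) there exist functions $d_1,d_2$ with $0\le d_1(S,H,t)\le K'S(1+|\ln S|+|\ln H|)$ and $0\le d_2(S,H,t)\le K'H(1+|\ln S|+|\ln H|)$ for some constant $K'$, such that $|h(S,H,t,v,p,z)-h(S,H,t,v,q,w)|\le d_1(S,H,t)|p-q|+d_2(S,H,t)|z-w|$ for all $S,H>0$, $t\in[0,T]$,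 $v,p,q,z,w\in\mathbb R$; and (iv) there exists $m_1>0$ such that $$\Big|h\Big(S_1,H_1,t,v,\frac{p}{S_1},\frac{q}{H_1}\Big)-h\Big(S_2,H_2,t,v,\frac{p}{S_2},\frac{q}{H_2}\Big)\Big|\le m_1\big(1+\sqrt{p^2+q^2}\big)\Big[\Big|\ln\frac{S_1}{S_2}\Big|+\Big|\ln\frac{H_1}{H_2}\Big|\Big]$$ for all $S_1,H_1,S_2,H_2>0$, $t\in[0,T]$, $v,p,q\in\mathbb R$.
   Context: $h$ is the first-order part of the writer's pricing PDE for an option on a non-traded asset $S$ hedged with a correlated traded asset $H$; properties (iii) and (iv) are the hypotheses on the nonlinearity needed for a comparison principle for the operator $v_t+\frac12\sigma^2S^2v_{SS}+\rho\sigma bSHv_{SH}+\frac12b^2H^2v_{HH}+h(S,H,t,v,v_S,v_H)$. Here $\mathrm{sgn}$ denotes the sign function. *)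

From Stdlib Require Import Reals.
Open Scope R_scope.

Definition sgn (p : R) : R :=
  match Rlt_dec 0 p with
  | left _ => 1
  | right _ => match Rlt_dec p 0 with left _ => -1 | right _ => 0 end
  end.

Definition mu_tilde (r rho : R) (mu sigma a b : R -> R -> R)
  (S H t : R) : R :=
  mu S t - (a H t - r) * rho * sigma S t / b H t.

Definition hfun (r rho alpha : R) (mu sigma a b : R -> R -> R)
  (S H t v p z : R) : R :=
  (mu_tilde r rho mu sigma a b S H t
     + alpha * sqrt (1 - rho ^ 2) * sigma S t * sgn p) * S * p
  + r * H * z - r * v.

(* Since sgn p * p = |p|, h = mu_tilde S p + c sigma S |p| + r H z - r v with
   c = alpha sqrt(1 - rho^2) in [0, alpha].  For (iii), p |-> m p + k |p| is Lipschitz with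
   constant |m| + k, which grows like 1 + |ln S| + |ln H| because mu_tilde does, and so does
   sigma by its log-Lipschitz bound anchored at S = 1.  For (iv), substituting p / S cancels
   the factor S, leaving (mu_tilde_1 - mu_tilde_2) p + c (sigma_1 - sigma_2) |p|, which is
   log-Lipschitz in S with constant (C5 + alpha C1) |p|. *)
From Stdlib Require Import Reals Psatz.
Open Scope R_scope.

Lemma sgn_mul_abs (p : R) : sgn p * p = Rabs p.
Proof.
  unfold sgn; destruct (Rlt_dec 0 p).
  - rewrite Rabs_pos_eq; lra.
  - destruct (Rlt_dec p 0).
    + rewrite Rabs_left; lra.
    + replace p with 0 by lra; rewrite Rabs_R0; ring.
Qed.

Lemma ln_div_pos (x y : R) : 0 < x -> 0 < y -> ln (x / y) = ln x - ln y.
Proof.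
  intros Hx Hy; unfold Rdiv.
  rewrite ln_mult, ln_Rinv; auto with real.
Qed.

Lemma Rabs_le_1_plus_norm (p q : R) : Rabs p <= 1 + sqrt (p ^ 2 + q ^ 2).
Proof.
  rewrite <- sqrt_Rsqr_abs.
  assert (sqrt (Rsqr p) <= sqrt (p ^ 2 + q ^ 2)) by (apply sqrt_le_1_alt; unfold Rsqr; nra).
  lra.
Qed.

Lemma Rabs_lin_abs_lipschitz (m k p q : R) : 0 <= k ->
  Rabs ((m * p + k * Rabs p) - (m * q + k * Rabs q)) <= (Rabs m + k) * Rabs (p - q).
Proof.
  intros Hk.
  replace ((m * p + k * Rabs p) - (m * q + k * Rabs q))
    with (m * (p - q) + k * (Rabs p - Rabs q)) by ring.
  eapply Rle_trans; [apply Rabs_triang|].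
  rewrite !Rabs_mult, (Rabs_pos_eq k) by lra.
  pose proof (Rabs_triang_inv2 p q).
  nra.
Qed.

Lemma le_log_growth_of_log_lipschitz (f : R -> R) (C1 C2 S : R) :
  Rabs (f S - f 1) <= C1 * Rabs (ln S - ln 1) -> f 1 <= C2 ->
  f S <= C2 + C1 * Rabs (ln S).
Proof.
  intros Hlip H1; rewrite ln_1, Rminus_0_r in Hlip.
  pose proof (Rle_abs (f S - f 1)); lra.
Qed.

Definition unhedged_coef (alpha rho : R) : R := alpha * sqrt (1 - rho ^ 2).

Lemma unhedged_coef_bounds (alpha rho : R) : 0 <= alpha -> -1 <= rho <= 1 ->
  0 <= unhedged_coef alpha rho <= alpha.
Proof.
  intros Halpha Hrho; unfold unhedged_coef.
  pose proof (sqrt_pos (1 - rho ^ 2)).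
  assert (sqrt (1 - rho ^ 2) <= 1).
  { rewrite <- sqrt_1 at 2; apply sqrt_le_1_alt; nra. }
  nra.
Qed.

Section Nonlinearity.

Variables (T r rho alpha : R) (mu sigma a b : R -> R -> R).
Hypotheses (Hr : 0 <= r) (Hrho : -1 <= rho <= 1) (Halpha : 0 <= alpha).
Hypothesis Hsigma_nonneg : forall S t, 0 < S -> 0 <= t <= T -> 0 <= sigma S t.

Local Notation mt := (mu_tilde r rho mu sigma a b).
Local Notation h := (hfun r rho alpha mu sigma a b).
Local Notation c := (unhedged_coef alpha rho).

Lemma hfun_abs_form S H t v p z :
  h S H t v p z = mt S H t * S * p + c * sigma S t * S * Rabs p + r * H * z - r * v.
Proof. unfold hfun, unhedged_coef; rewrite <- sgn_mul_abs; ring. Qed.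

Lemma hfun_scaled S H t v p q : 0 < S -> 0 < H ->
  h S H t v (p / S) (q / H) = mt S H t * p + c * sigma S t * Rabs p + r * q - r * v.
Proof.
  intros HS HH; rewrite hfun_abs_form.
  unfold Rdiv; rewrite Rabs_mult, Rabs_inv, (Rabs_pos_eq S) by lra.
  field; lra.
Qed.

Lemma hfun_lipschitz_pz S H t v p q z w : 0 < S -> 0 < H -> 0 <= t <= T ->
  Rabs (h S H t v p z - h S H t v q w)
    <= S * (Rabs (mt S H t) + c * sigma S t) * Rabs (p - q) + r * H * Rabs (z - w).
Proof.
  intros HS HH Ht; rewrite !hfun_abs_form.
  pose proof (unhedged_coef_bounds alpha rho Halpha Hrho).
  pose proof (Hsigma_nonneg S t HS Ht).
  set (k := c * sigma S t).
  replace (mt S H t * S * p + k * S * Rabs p + r * H * z - r * v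
           - (mt S H t * S * q + k * S * Rabs q + r * H * w - r * v))
    with (S * ((mt S H t * p + k * Rabs p) - (mt S H t * q + k * Rabs q))
          + r * H * (z - w)) by ring.
  eapply Rle_trans; [apply Rabs_triang|].
  rewrite !Rabs_mult, (Rabs_pos_eq S), (Rabs_pos_eq r), (Rabs_pos_eq H) by lra.
  rewrite (Rmult_assoc S).
  apply Rplus_le_compat_r, Rmult_le_compat_l; [lra|].
  apply Rabs_lin_abs_lipschitz; unfold k; nra.
Qed.

Variables (C1 C2 K : R).
Hypotheses (HC1 : 0 <= C1) (HC2 : 0 <= C2).
Hypothesis Hsig_lip : forall S1 S2 t, 0 < S1 -> 0 < S2 -> 0 <= t <= T ->
  Rabs (sigma S1 t - sigma S2 t) <= C1 * Rabs (ln S1 - ln S2).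
Hypothesis Hsig_growth : forall S t, 0 < S -> 0 <= t <= T ->
  sigma S t <= C2 * sqrt (S * (1 + ln S)).
Hypothesis Hmut_growth : forall S H t, 0 < S -> 0 < H -> 0 <= t <= T ->
  Rabs (mt S H t) <= K * (1 + Rabs (ln S) + Rabs (ln H)).

Lemma sigma_log_growth S t : 0 < S -> 0 <= t <= T -> sigma S t <= C2 + C1 * Rabs (ln S).
Proof.
  intros HS Ht.
  apply (le_log_growth_of_log_lipschitz (fun S => sigma S t)).
  - apply Hsig_lip; auto; lra.
  - pose proof (Hsig_growth 1 t Rlt_0_1 Ht) as G.
    rewrite ln_1, Rplus_0_r, Rmult_1_l, sqrt_1, Rmult_1_r in G; exact G.
Qed.

Lemma lipschitz_coef_log_growth S H t : 0 < S -> 0 < H -> 0 <= t <= T ->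
  Rabs (mt S H t) + c * sigma S t
    <= (K + alpha * (C1 + C2)) * (1 + Rabs (ln S) + Rabs (ln H)).
Proof.
  intros HS HH Ht.
  pose proof (unhedged_coef_bounds alpha rho Halpha Hrho).
  pose proof (Hsigma_nonneg S t HS Ht).
  pose proof (sigma_log_growth S t HS Ht).
  pose proof (Hmut_growth S H t HS HH Ht).
  pose proof (Rabs_pos (ln S)); pose proof (Rabs_pos (ln H)).
  assert (c * sigma S t <= alpha * (C2 + C1 * Rabs (ln S))) by
    (apply Rmult_le_compat; lra).
  assert (0 <= alpha * C1) by nra; assert (0 <= alpha * C2) by nra.
  nra.
Qed.

Lemma pz_weights_log_growth S H t : 0 < S -> 0 < H -> 0 <= t <= T ->
  let L := 1 + Rabs (ln S) + Rabs (ln H) in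
  let K' := K + alpha * (C1 + C2) + r in
  (0 <= S * (Rabs (mt S H t) + c * sigma S t) <= K' * S * L) /\
  (0 <= r * H <= K' * H * L).
Proof.
  intros HS HH Ht L K'.
  pose proof (unhedged_coef_bounds alpha rho Halpha Hrho).
  pose proof (Hsigma_nonneg S t HS Ht).
  pose proof (Rabs_pos (mt S H t)).
  pose proof (lipschitz_coef_log_growth S H t HS HH Ht) as Hcoef; fold L in Hcoef.
  assert (HL : 1 <= L) by (pose proof (Rabs_pos (ln S)); pose proof (Rabs_pos (ln H)); unfold L; lra).
  assert (0 <= alpha * (C1 + C2)) by nra.
  assert (r <= r * L) by nra.
  assert (0 <= c * sigma S t) by nra.
  unfold K'; split; split.
  - apply Rmult_le_pos; lra.
  - replace ((K + alpha * (C1 + C2) + r) * S * L)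
      with (S * ((K + alpha * (C1 + C2)) * L + r * L)) by ring.
    apply Rmult_le_compat_l; lra.
  - nra.
  - replace ((K + alpha * (C1 + C2) + r) * H * L)
      with (H * ((K + alpha * (C1 + C2)) * L + r * L)) by ring.
    rewrite (Rmult_comm r H); apply Rmult_le_compat_l; nra.
Qed.

Variable C5 : R.
Hypothesis Hmut_lip : forall S1 H1 S2 H2 t, 0 < S1 -> 0 < H1 -> 0 < S2 -> 0 < H2 ->
  0 <= t <= T -> Rabs (mt S1 H1 t - mt S2 H2 t) <= C5 * Rabs (ln S1 - ln S2).

Lemma hfun_scaled_log_lipschitz S1 H1 S2 H2 t v p q :
  0 < S1 -> 0 < H1 -> 0 < S2 -> 0 < H2 -> 0 <= t <= T ->
  Rabs (h S1 H1 t v (p / S1) (q / H1) - h S2 H2 t v (p / S2) (q / H2))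
    <= (C5 + alpha * C1) * Rabs p * Rabs (ln (S1 / S2)).
Proof.
  intros HS1 HH1 HS2 HH2 Ht.
  rewrite !hfun_scaled, ln_div_pos by lra.
  pose proof (unhedged_coef_bounds alpha rho Halpha Hrho).
  pose proof (Hmut_lip S1 H1 S2 H2 t HS1 HH1 HS2 HH2 Ht).
  pose proof (Hsig_lip S1 S2 t HS1 HS2 Ht).
  pose proof (Rabs_pos (sigma S1 t - sigma S2 t)); pose proof (Rabs_pos p).
  replace (mt S1 H1 t * p + c * sigma S1 t * Rabs p + r * q - r * v
           - (mt S2 H2 t * p + c * sigma S2 t * Rabs p + r * q - r * v))
    with ((mt S1 H1 t - mt S2 H2 t) * p + c * (sigma S1 t - sigma S2 t) * Rabs p) by ring.
  eapply Rle_trans; [apply Rabs_triang|].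
  rewrite !Rabs_mult, Rabs_Rabsolu, (Rabs_pos_eq c) by lra.
  assert (c * Rabs (sigma S1 t - sigma S2 t) <= alpha * (C1 * Rabs (ln S1 - ln S2)))
    by (apply Rmult_le_compat; lra).
  nra.
Qed.

End Nonlinearity.

Theorem lemmaA2
  (T r rho alpha : R) (mu sigma a b : R -> R -> R)
  (HT : 0 < T) (Hr : 0 <= r) (Hrho : -1 <= rho <= 1) (Halpha : 0 <= alpha)
  (Hmu_nonneg : forall S t, 0 < S -> 0 <= t <= T -> 0 <= mu S t)
  (Hsigma_nonneg : forall S t, 0 < S -> 0 <= t <= T -> 0 <= sigma S t)
  (Hb : forall H t, 0 < H -> 0 <= t <= T -> b H t <> 0)
  (C1 C2 : R) (HC1 : 0 < C1) (HC2 : 0 < C2)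
  (Hsig_lip : forall S1 S2 t, 0 < S1 -> 0 < S2 -> 0 <= t <= T ->
     Rabs (sigma S1 t - sigma S2 t) <= C1 * Rabs (ln S1 - ln S2))
  (Hsig_growth : forall S t, 0 < S -> 0 <= t <= T ->
     sigma S t <= C2 * sqrt (S * (1 + ln S)))
  (K C5 : R) (HK : 0 < K) (HC5 : 0 < C5)
  (Hmut_growth : forall S H t, 0 < S -> 0 < H -> 0 <= t <= T ->
     Rabs (mu_tilde r rho mu sigma a b S H t)
       <= K * (1 + Rabs (ln S) + Rabs (ln H)))
  (Hmut_lip : forall S1 H1 S2 H2 t, 0 < S1 -> 0 < H1 -> 0 < S2 -> 0 < H2 ->
     0 <= t <= T ->
     Rabs (mu_tilde r rho mu sigma a b S1 H1 t
           - mu_tilde r rho mu sigma a b S2 H2 t)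
       <= C5 * Rabs (ln S1 - ln S2)) :
  (* (iii) *)
  (exists (K' : R) (d1 d2 : R -> R -> R -> R),
     (forall S H t, 0 < S -> 0 < H -> 0 <= t <= T ->
        0 <= d1 S H t <= K' * S * (1 + Rabs (ln S) + Rabs (ln H)) /\
        0 <= d2 S H t <= K' * H * (1 + Rabs (ln S) + Rabs (ln H))) /\
     (forall S H t v p q z w, 0 < S -> 0 < H -> 0 <= t <= T ->
        Rabs (hfun r rho alpha mu sigma a b S H t v p z
              - hfun r rho alpha mu sigma a b S H t v q w)
          <= d1 S H t * Rabs (p - q) + d2 S H t * Rabs (z - w)))
  /\
  (* (iv) *)
  (exists m1 : R, 0 < m1 /\
     forall S1 H1 S2 H2 t v p q, 0 < S1 -> 0 < H1 -> 0 < S2 -> 0 < H2 ->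
       0 <= t <= T ->
       Rabs (hfun r rho alpha mu sigma a b S1 H1 t v (p / S1) (q / H1)
             - hfun r rho alpha mu sigma a b S2 H2 t v (p / S2) (q / H2))
         <= m1 * (1 + sqrt (p ^ 2 + q ^ 2))
              * (Rabs (ln (S1 / S2)) + Rabs (ln (H1 / H2)))).
Proof.
  split.
  - exists (K + alpha * (C1 + C2) + r),
      (fun S H t => S * (Rabs (mu_tilde r rho mu sigma a b S H t)
                         + unhedged_coef alpha rho * sigma S t)),
      (fun S H t => r * H).
    split; intros.
    + eapply pz_weights_log_growth; eauto; lra.
    + eapply hfun_lipschitz_pz; eauto.
  - exists (C5 + alpha * C1); split; [nra|].
    intros S1 H1 S2 H2 t v p q HS1 HH1 HS2 HH2 Ht.
    eapply Rle_trans.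
    { apply hfun_scaled_log_lipschitz with T; auto. }
    pose proof (Rabs_le_1_plus_norm p q).
    pose proof (Rabs_pos p); pose proof (Rabs_pos (ln (S1 / S2))); pose proof (Rabs_pos (ln (H1 / H2))).
    assert (0 <= C5 + alpha * C1) by nra.
    apply Rmult_le_compat; [nra | lra | apply Rmult_le_compat_l; lra | lra].
Qed.
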